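(* Let $q:\mathsf D\to\mathbb R$ be a query with sensitivity $\Delta q\in(0,\infty)$, and let $\Lambda$ be a random variable with support in $(0,\infty)$ and $\mathbb E[\Lambda]<\infty$, with MGF $M_\Lambda(t)=\mathbb E[e^{t\Lambda}]$. Then the Randomized DP Laplace mechanism $\mathcal M_q$ with reciprocal scale $\Lambda$ is $\epsilon$-differentially private with $$\epsilon=\ln\left[\frac{\mathbb E(\Lambda)}{M_\Lambda'(-\Delta q)}\right],\qquad M'_\Lambda(-\Delta q)=\frac{d M_\Lambda(t)}{dt}\Big|_{t=-\Delta q}=\mathbb E\big[\Lambda e^{-\Delta q\,\Lambda}\big].$$
   Context: Databases form a set $\mathsf D$ with a symmetric adjacency relation $\mathrm{Adj}$. The sensitivity of $q:\mathsf D\to\mathbb R$ is $\Delta q=\sup\{|q(d)-q(d')|:\mathrm{Adj}(d,d')\}$. A randomized mechanism $M$ is $\epsilon$-differentially private if $\mathbb P(M(d)\in S)\le e^{\epsilon}\mathbb P(M(d')\in S)$ for all adjacent $d,d'$ and all Borel sets $S$. The Randomized DP Laplace mechanism with reciprocal-scale distribution $\Lambda$ (a random variable with values in $(0,\infty)$, playing the role of $1/b$ for the Laplace scale $b$) is defined by $\mathcal M_q(d)=q(d)+W$, where conditionally on $\Lambda=\lambda$ the noise $W$ is Laplace with mean $0$ and scale $1/\lambda$, i.e. has density $\frac{\lambda}{2}e^{-\lambda|w|}$; the pair $(\Lambda,W)$ is drawn independently of $d$. *)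

From HB Require Import structures.
From mathcomp Require Import all_boot all_order all_algebra.
From mathcomp Require Import all_classical all_reals all_analysis.
Set Implicit Arguments. Unset Strict Implicit. Unset Printing Implicit Defensive.
Import Order.TTheory GRing.Theory Num.Theory.
Local Open Scope classical_set_scope.
Local Open Scope ring_scope.

Definition laplace_pdf {R : realType} (l m w : R) : R :=
  l / 2 * expR (- (l * `|w - m|)).

(* Law of the Randomized DP Laplace mechanism M_q(d) = q d + W, where
   Lambda ~ mu and, conditionally on Lambda = l, W ~ Laplace(0, 1/l):
   P(M_q(d) \in S) = \int_{l>0} \int_S laplace_pdf l (q d) w dw dmu(l). *)
Definition rdp_laplace_prob {R : realType} {D : Type}
  (mu : probability R R) (q : D -> R) (d : D) (S : set R) : \bar R :=
  (\int[mu]_(l in `]0%R, +oo[%classic)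
     (\int[lebesgue_measure]_(w in S) (laplace_pdf l (q d) w)%:E))%E.

Definition rdp_laplace_dp {R : realType} {D : Type} (Adj : D -> D -> Prop)
  (mu : probability R R) (q : D -> R) (eps : R) : Prop :=
  forall d d', Adj d d' -> forall S : set R, measurable S ->
    (rdp_laplace_prob mu q d S <= (expR eps)%:E * rdp_laplace_prob mu q d' S)%E.

Definition sensitivity {R : realType} {D : Type} (Adj : D -> D -> Prop)
  (q : D -> R) : \bar R :=
  ereal_sup [set x : \bar R | exists d d', Adj d d' /\ x = (`|q d - q d'|)%:E].

From HB Require Import structures.
From mathcomp Require Import all_boot all_order all_algebra.
From mathcomp Require Import all_classical all_reals all_analysis.
From mathcomp Require Import ring lra measurable_realfun.
Import Order.TTheory GRing.Theory Num.Theory.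
Local Open Scope classical_set_scope.
Local Open Scope ring_scope.

(* Writing K(t) = E[L exp(-t L)] = M'_L(-t), Tonelli shows that the output of
   the mechanism on d has density K(|w - q d|) / 2.  K is nonincreasing, and
   K(b) K(D) <= K(0) K(b + D) by Chebyshev's correlation inequality for the
   decreasing functions exp(-b l), exp(-D l) under the weight l dmu(l).  As
   |w - q d'| <= |w - q d| + Dq for adjacent d, d', the ratio of the two
   densities is at most K(0) / K(Dq) = E[L] / M'_L(-Dq) at every w, and
   integrating over S gives the privacy bound. *)

Section integral_complements.
Context {d} {T : measurableType d} {R : realType}.
Context {mu : {measure set T -> \bar R}}.
Implicit Types (D A : set T) (f g : T -> R).

Lemma integrableD_EFin {D f g} : measurable D ->
  mu.-integrable D (EFin \o f) -> mu.-integrable D (EFin \o g) ->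
  mu.-integrable D (EFin \o (f \+ g)).
Proof.
move=> mD If Ig; rewrite (_ : EFin \o _ = (EFin \o f) \+ (EFin \o g))%E.
  exact: integrableD.
by apply/funext => x /=; rewrite EFinD.
Qed.

Lemma integrableB_EFin {D f g} : measurable D ->
  mu.-integrable D (EFin \o f) -> mu.-integrable D (EFin \o g) ->
  mu.-integrable D (EFin \o (f \- g)).
Proof.
move=> mD If Ig; rewrite (_ : EFin \o _ = (EFin \o f) \- (EFin \o g))%E.
  exact: integrableB.
by apply/funext => x /=; rewrite EFinB.
Qed.

Lemma integrableZl_EFin {D f} (k : R) : measurable D ->
  mu.-integrable D (EFin \o f) -> mu.-integrable D (EFin \o (fun x => k * f x)).
Proof.
move=> mD If; rewrite (_ : EFin \o _ = (fun x => k%:E * (EFin \o f) x))%E.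
  exact: integrableZl.
by apply/funext => x /=; rewrite EFinM.
Qed.

Lemma integral_mulindic A f :
  (\int[mu]_x (f x * \1_A x)%:E = \int[mu]_(x in A) (f x)%:E)%E.
Proof.
rewrite [RHS]integral_mkcond; apply: eq_integral => x _.
by rewrite patchE indicE; case: ifP; rewrite ?mulr1 ?mulr0.
Qed.

Lemma Rintegral_gt0 D f : measurable D -> mu D != 0%E ->
  mu.-integrable D (EFin \o f) -> (forall x, D x -> 0 < f x) ->
  0 < \int[mu]_(x in D) f x.
Proof.
move=> mD muD If f_gt0.
rewrite lt_def Rintegral_ge0 => [|x /f_gt0/ltW//]; rewrite andbT.
apply: contra muD => /eqP If0.
have int_abs0 : (\int[mu]_(x in D) `|(EFin \o f) x| = 0)%E.
  rewrite -[RHS](_ : (\int[mu]_(x in D) (f x)%:E = 0)%E); last first.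
    by rewrite -(fineK (integrable_fin_num mD If)) -[fine _]/(Rintegral _ _ _) If0.
  by apply: eq_integral => x /[1!inE] /f_gt0/ltW f0 /=; rewrite ger0_norm.
have [mf _] := integrableP _ _ _ If.
have [N [mN N0 sub]] := (ae_eq_integral_abs mu mD mf).1 int_abs0.
have DN : D `<=` N.
  by move=> x Dx; apply: sub => /(_ Dx) [] fx0; have := f_gt0 x Dx; rewrite fx0 ltxx.
by rewrite eq_le measure_ge0 andbT -N0 le_measure ?inE.
Qed.

Lemma Rintegral_setT_conull {D f} : measurable D -> mu (~` D) = 0%E ->
  measurable_fun setT f -> \int[mu]_x f x = \int[mu]_(x in D) f x.
Proof.
move=> mD muDC mf; congr fine; rewrite [RHS]integral_mkcond.
apply: ae_eq_integral => //.
- exact/measurable_EFinP.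
- apply/(measurable_restrictT _ mD).1.
  exact/measurable_EFinP/(measurable_funS measurableT).
- exists (~` D); split => //; first exact: measurableC.
  by move=> x /= /not_implyP[_]; apply: contra_not => Dx; rewrite patchE mem_set.
Qed.

End integral_complements.

Lemma expRN_sub_mul_ge0 {R : realType} (c D l l0 : R) : 0 <= c -> 0 <= D ->
  0 <= (expR (- (c * l)) - expR (- (c * l0))) *
       (expR (- (D * l)) - expR (- (D * l0))).
Proof.
move=> c0 D0; have [l_le|l_gt] := leP l l0.
- by apply: mulr_ge0; rewrite subr_ge0 ler_expR lerN2; apply: ler_wpM2l.
- by rewrite -mulrNN; apply: mulr_ge0;
    rewrite opprB subr_ge0 ler_expR lerN2; apply: ler_wpM2l => //; apply: ltW.
Qed.

Section Rpos.
Context {R : realType}.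

Definition Rpos : set R := `]0, +oo[.

Lemma measurable_Rpos : measurable Rpos.
Proof. exact: measurable_itv. Qed.

Lemma Rpos_gt0 l : Rpos l -> 0 < l.
Proof. by rewrite /Rpos /= in_itv /= andbT. Qed.

End Rpos.

Section dmgfN.
Context {R : realType}.
Variable mu : {measure set R -> \bar R}.

Definition lexpN (t l : R) := l * expR (- (t * l)).

(* [dmgfN mu t] is the paper's M'_L(-t) = E[L exp(-t L)] for L ~ mu, the
   integral being taken over (0, +oo) only. *)
Definition dmgfN (t : R) := \int[mu]_(l in Rpos) lexpN t l.

Lemma dmgfN0 : dmgfN 0 = \int[mu]_(l in Rpos) l.
Proof. by apply: eq_Rintegral => l _; rewrite /lexpN mul0r oppr0 expR0 mulr1. Qed.

Lemma measurable_lexpN t : measurable_fun setT (lexpN t).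
Proof. by apply: measurable_funM => //; do 2 apply: measurableT_comp => //. Qed.

Hypothesis mu_Rpos : mu Rpos != 0%E.
Hypothesis mu_int : mu.-integrable Rpos (fun l => l%:E).

Lemma integrable_lexpN t : 0 <= t -> mu.-integrable Rpos (EFin \o lexpN t).
Proof.
move=> t0; apply: le_integrable mu_int => //; first exact: measurable_Rpos.
  by apply/measurable_EFinP; apply: measurable_funS (measurable_lexpN t).
move=> l /Rpos_gt0 l0 /=; rewrite lee_fin /lexpN normrM.
apply: ler_piMr => //.
by rewrite ger0_norm ?expR_ge0 // expR_le1 oppr_le0 mulr_ge0 // ltW.
Qed.

Lemma dmgfN_gt0 t : 0 <= t -> 0 < dmgfN t.
Proof.
move=> t0; apply: Rintegral_gt0 => //; first exact: measurable_Rpos.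
  exact: integrable_lexpN.
by move=> l /Rpos_gt0 l0; rewrite mulr_gt0 // expR_gt0.
Qed.

Lemma le_dmgfN s t : 0 <= s -> s <= t -> dmgfN t <= dmgfN s.
Proof.
move=> s0 st; apply: le_Rintegral; first exact: measurable_Rpos.
- exact: integrable_lexpN (le_trans s0 st).
- exact: integrable_lexpN.
move=> l /Rpos_gt0/ltW l0; apply: ler_wpM2l => //.
by rewrite ler_expR lerN2; apply: ler_wpM2r.
Qed.

(* Chebyshev's correlation inequality: l0 is where exp(-D l) crosses its mean
   m under the weight l dmu(l), so exp(-c l) - a and exp(-D l) - m always have
   the same sign. *)
Lemma le_dmgfN_mul c D : 0 <= c -> 0 < D ->
  dmgfN c * dmgfN D <= dmgfN 0 * dmgfN (c + D).
Proof.
move=> c0 D0.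
have K0_gt0 := dmgfN_gt0 0 (lexx 0); have KD_gt0 := dmgfN_gt0 D (ltW D0).
pose m := dmgfN D / dmgfN 0.
pose l0 := - ln m / D.
pose a := expR (- (c * l0)).
have expR_l0 : expR (- (D * l0)) = m.
  rewrite (_ : - (D * l0) = ln m) ?lnK ?posrE ?divr_gt0 //.
  by rewrite /l0; field; exact: lt0r_neq0.
have pointwise l : Rpos l ->
    a * lexpN D l + m * lexpN c l - a * m * lexpN 0 l <= lexpN (c + D) l.
  move=> /Rpos_gt0 l_gt0; rewrite -subr_ge0.
  have := expRN_sub_mul_ge0 c D l l0 c0 (ltW D0); rewrite -/a expR_l0 => prod_ge0.
  have -> : lexpN (c + D) l - (a * lexpN D l + m * lexpN c l - a * m * lexpN 0 l)
      = l * ((expR (- (c * l)) - a) * (expR (- (D * l)) - m)).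
    by rewrite /lexpN mul0r oppr0 expR0 mulrDl opprD expRD; ring.
  by rewrite mulr_ge0 // ltW.
have Ic := integrable_lexpN c c0; have ID := integrable_lexpN D (ltW D0).
have I0 := integrable_lexpN 0 (lexx 0).
have mRpos := @measurable_Rpos R.
have I1 : mu.-integrable Rpos (EFin \o (fun l => a * lexpN D l + m * lexpN c l)).
  by apply: integrableD_EFin => //; apply: integrableZl_EFin.
have I2 : mu.-integrable Rpos (EFin \o (fun l => a * m * lexpN 0 l)).
  exact: integrableZl_EFin.
have I12 : mu.-integrable Rpos
    (EFin \o (fun l => a * lexpN D l + m * lexpN c l - a * m * lexpN 0 l)).
  exact: integrableB_EFin.
have := le_Rintegral mRpos I12 (integrable_lexpN _ (addr_ge0 c0 (ltW D0))) pointwise.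
rewrite RintegralB // RintegralD ?RintegralZl //; try exact: integrableZl_EFin.
rewrite -/(dmgfN D) -/(dmgfN c) -/(dmgfN 0) -/(dmgfN (c + D)).
have K0_neq0 := lt0r_neq0 K0_gt0.
have -> : a * dmgfN D + m * dmgfN c - a * m * dmgfN 0 = m * dmgfN c.
  by rewrite /m; field.
rewrite -(ler_pM2l K0_gt0) (_ : dmgfN 0 * (m * dmgfN c) = dmgfN c * dmgfN D) //.
by rewrite /m; field.
Qed.

Lemma le_dmgfN_shift a b D : 0 <= a -> 0 <= b -> 0 < D -> a <= b + D ->
  dmgfN b * dmgfN D <= dmgfN 0 * dmgfN a.
Proof.
move=> a0 b0 D0 ab; apply: le_trans (le_dmgfN_mul b D b0 D0) _.
by rewrite ler_wpM2l ?(ltW (dmgfN_gt0 0 (lexx 0))) ?le_dmgfN.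
Qed.

Lemma le_dmgfN_distD (m m' w D : R) : 0 < D -> `|m - m'| <= D ->
  dmgfN `|w - m| <= dmgfN 0 / dmgfN D * dmgfN `|w - m'|.
Proof.
move=> D0 mm'; rewrite mulrAC ler_pdivlMr; last exact: dmgfN_gt0 D (ltW D0).
apply: le_dmgfN_shift => //; rewrite (_ : w - m' = (w - m) + (m - m')); last by ring.
by rewrite (le_trans (ler_normD _ _)) // lerD2l.
Qed.

End dmgfN.

Section laplace_mechanism.
Context {R : realType}.
Variable mu : probability R R.
Hypothesis mu_int : mu.-integrable Rpos (fun l => l%:E).

(* The joint density of (L, W) times the indicator of S, extended by 0 to the
   whole plane so that Tonelli's theorem applies. *)
Definition laplace_joint (m : R) (S : set R) (z : R * R) : \bar R :=
  (laplace_pdf z.1 m z.2 * \1_Rpos z.1 * \1_S z.2)%:E.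

Lemma measurable_laplace_joint m S : measurable S ->
  measurable_fun setT (laplace_joint m S).
Proof.
move=> mS; apply/measurable_EFinP.
apply: measurable_funM; last first.
  by apply: measurableT_comp => //; exact: measurable_indic.
apply: measurable_funM; last first.
  by apply: measurableT_comp => //; apply: measurable_indic; exact: measurable_Rpos.
apply: measurable_funM; first exact: measurable_funM.
do 2 apply: measurableT_comp => //.
apply: measurable_funM => //; apply: measurableT_comp => //.
exact: measurable_funB.
Qed.

Lemma laplace_joint_ge0 m S z : (0 <= laplace_joint m S z)%E.
Proof.
rewrite lee_fin; apply: mulr_ge0; last by rewrite indicE.
rewrite indicE; case: (boolP (z.1 \in Rpos)) => [/[1!inE]/Rpos_gt0 z1_gt0|_].
  by rewrite mulr1 mulr_ge0 ?divr_ge0 ?expR_ge0 // ltW.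
by rewrite mulr0.
Qed.

Lemma integral_laplace_joint m S w :
  (\int[mu]_l laplace_joint m S (l, w) = (dmgfN mu `|w - m| / 2 * \1_S w)%:E)%E.
Proof.
pose c : R := \1_S w / 2.
have mRpos := @measurable_Rpos R.
have I := integrable_lexpN mu mu_int `|w - m| (normr_ge0 _).
rewrite (eq_integral (fun l => ((c * lexpN `|w - m| l) * \1_Rpos l)%:E)); last first.
  move=> l _; rewrite /laplace_joint /laplace_pdf /lexpN /c /= (mulrC l `|w - m|).
  by congr EFin; ring.
have cI_fin := integrable_fin_num mRpos (integrableZl_EFin c mRpos I).
rewrite integral_mulindic -(fineK cI_fin).
by rewrite -/(Rintegral _ _ _) RintegralZl // /c /dmgfN; congr EFin; ring.
Qed.

Lemma measurable_laplace_density (m : R) :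
  measurable_fun setT (fun w : R => (dmgfN mu `|w - m| / 2)%:E).
Proof.
have := measurable_fun_fubini_tonelli_G (m1 := mu) _
  (measurable_laplace_joint m setT measurableT) (laplace_joint_ge0 m setT).
apply: eq_measurable_fun => w _.
by rewrite /fubini_G integral_laplace_joint indicT mulr1.
Qed.

Lemma rdp_laplace_probE (D : Type) (q : D -> R) d S : measurable S ->
  rdp_laplace_prob mu q d S =
  (\int[lebesgue_measure]_(w in S) (dmgfN mu `|w - q d| / 2)%:E)%E.
Proof.
move=> mS; transitivity
    (\int[mu]_l \int[lebesgue_measure]_w laplace_joint (q d) S (l, w))%E.
  rewrite /rdp_laplace_prob integral_mkcond; apply: eq_integral => l _.
  rewrite patchE; case: ifPn => l_Rpos.
    rewrite integral_mkcond; apply: eq_integral => w _.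
    rewrite /laplace_joint patchE !indicE l_Rpos mulr1.
    by case: ifP; rewrite ?mulr1 ?mulr0.
  rewrite integral0_eq // => w _.
  by rewrite /laplace_joint indicE (negbTE l_Rpos) mulr0 mul0r.
rewrite fubini_tonelli; last 2 first.
- exact: measurable_laplace_joint.
- exact: laplace_joint_ge0.
under eq_integral do rewrite integral_laplace_joint.
exact: integral_mulindic.
Qed.

End laplace_mechanism.

Lemma le_sensitivity {R : realType} {D : Type} (Adj : D -> D -> Prop)
    (q : D -> R) d d' :
  Adj d d' -> (`|q d - q d'|%:E <= sensitivity Adj q)%E.
Proof. by move=> adj; apply: ereal_sup_ubound; exists d, d'. Qed.

Theorem mainTheorem2 (R : realType) (D : Type) (Adj : D -> D -> Prop)
  (q : D -> R) (Dq : R) (mu : probability R R) :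
  (forall d d', Adj d d' -> Adj d' d) ->
  sensitivity Adj q = Dq%:E -> 0 < Dq ->
  mu `]0%R, +oo[%classic = 1%E ->
  mu.-integrable setT (fun l : R => l%:E) ->
  rdp_laplace_dp Adj mu q
    (ln (Rintegral mu setT (fun l => l) /
         Rintegral mu setT (fun l => l * expR (- (Dq * l))))).
Proof.
move=> _ sens_q Dq_gt0 mu_Rpos mu_int_setT.
have mRpos := @measurable_Rpos R.
have mu_int := integrableS measurableT mRpos (subsetT _) mu_int_setT.
have mu_RposC : mu (~` Rpos) = 0%E by rewrite probability_setC // mu_Rpos subee.
have mu_Rpos_neq0 : mu Rpos != 0%E by rewrite mu_Rpos oner_neq0.
have K0_gt0 := dmgfN_gt0 mu mu_Rpos_neq0 mu_int 0 (lexx 0).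
have KDq_gt0 := dmgfN_gt0 mu mu_Rpos_neq0 mu_int Dq (ltW Dq_gt0).
rewrite (Rintegral_setT_conull mRpos mu_RposC) // -dmgfN0.
rewrite (Rintegral_setT_conull mRpos mu_RposC (measurable_lexpN Dq)).
move=> d d' adj S mS; rewrite -/(dmgfN mu Dq) lnK ?posrE ?divr_gt0 //.
rewrite !rdp_laplace_probE //.
have density_ge0 (m w : R) : (0 <= (dmgfN mu `|w - m| / 2)%:E)%E.
  by rewrite lee_fin divr_ge0 // ltW // dmgfN_gt0.
have measurable_density (m : R) :=
  measurable_funS measurableT (subsetT S) (measurable_laplace_density mu mu_int m).
rewrite -ge0_integralZl //.
apply: ge0_le_integral => //.
- exact: measurable_density.
- by apply: measurable_funeM; exact: measurable_density.
- move=> w _; rewrite -EFinM lee_fin mulrA ler_wpM2r // le_dmgfN_distD //.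
  by rewrite -lee_fin -sens_q le_sensitivity.
- exact: measurable_density.
- by rewrite lee_fin divr_ge0 // ltW.
Qed.
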